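(* If $\eta$ is a probability measure, then $\int\varphi\,d\eta=\tau(\varphi)$ for each continuous function $\varphi:\mathbb{X}\to\mathbb{R}$.
   Context: $\mathbb{X}$ is a compact metric space. $(\xi_j)_{j\in\mathbb N}$ is a sequence of finitely additive outer probabilities on $\mathbb{X}$ (set functions on all subsets, values in $[0,1]$, finitely additive, $\xi_j(\mathbb{X})=1$). For $A\subset\mathbb{X}$, $\tau(A)=\limsup_{n\to\infty}\frac1n\sum_{j=0}^{n-1}\xi_j(A)$, and for a bounded measurable $\varphi$, $\tau(\varphi)=\limsup_{n\to\infty}\frac1n\sum_{j=0}^{n-1}\xi_j(\varphi)$ where $\xi_j(\varphi)=\int\varphi\,d\xi_j$. For $Y\subset\mathbb{X}$, $r>0$, $\nu_r(Y)=\inf\sum_{I\in\mathcal I}\tau(I)$ over countable covers $\mathcal I$ of $Y$ by open sets of diameter $\le r$; $\nu(Y)=\sup_{r>0}\nu_r(Y)$; $\eta$ is the restriction of $\nu$ to Borel sets. *)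

From HB Require Import structures.
From mathcomp Require Import all_boot all_order all_algebra.
From mathcomp Require Import all_classical all_reals all_analysis.
Set Implicit Arguments. Unset Strict Implicit. Unset Printing Implicit Defensive.
Import Order.TTheory GRing.Theory Num.Theory.
Import numFieldNormedType.Exports.
Local Open Scope classical_set_scope.
Local Open Scope ring_scope.

(* A (nonempty, i.e. pointed) metric space: needed because measurable types
   in MathComp-Analysis are pointed. *)
#[short(type="pmetricType")]
HB.structure Definition PMetric (R : numDomainType) :=
  { M of Metric R M & isPointed M }.

Section Defs.
Context {R : realType} {X : pmetricType R}.

Definition fa_outer_prob (xi : set X -> R) : Prop :=
  [/\ forall A, 0 <= xi A <= 1,
      forall A B, A `&` B = set0 -> xi (A `|` B) = xi A + xi B
    & xi setT = 1].

Definition finite_partition (n : nat) (P : 'I_n -> set X) : Prop :=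
  (forall i j, i != j -> P i `&` P j = set0) /\ (forall x, exists i, P i x).

Definition fa_integral (xi : set X -> R) (phi : X -> R) : R :=
  sup [set s | exists n (P : 'I_n -> set X), finite_partition P /\
         s = \sum_(i < n) inf [set phi x | x in P i] * xi (P i)].

Definition tau_set (xi : nat -> set X -> R) (A : set X) : \bar R :=
  limn_esup (fun n => (n%:R^-1 * \sum_(j < n) xi j A)%:E).

Definition tau_fun (xi : nat -> set X -> R) (phi : X -> R) : \bar R :=
  limn_esup (fun n => (n%:R^-1 * \sum_(j < n) fa_integral (xi j) phi)%:E).

Definition diam_le (A : set X) (r : R) : Prop :=
  forall x y, A x -> A y -> mdist x y <= r.

(* nu_r(Y): inf over countable covers (nat-indexed; finite covers are padded
   with the empty set) by open sets of diameter <= r *)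
Definition nu_r (xi : nat -> set X -> R) (r : R) (Y : set X) : \bar R :=
  ereal_inf [set (\sum_(0 <= k <oo) tau_set xi (I k))%E |
    I in [set I : nat -> set X |
           (forall k, open (I k) /\ diam_le (I k) r) /\ Y `<=` \bigcup_k I k]].

Definition nu (xi : nat -> set X -> R) (Y : set X) : \bar R :=
  ereal_sup [set nu_r xi r Y | r in [set r : R | 0 < r]].

End Defs.

Notation borel X := (g_sigma_algebraType (@open X)).

Definition eta_borel {R : realType} {X : pmetricType R} (xi : nat -> set X -> R)
  : set (borel X) -> \bar R := fun A => nu xi A.

From HB Require Import structures.
From mathcomp Require Import all_boot all_order all_algebra.
From mathcomp Require Import all_classical all_reals all_analysis.
From mathcomp Require Import ring lra.
Import Order.TTheory GRing.Theory Num.Theory.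
Import numFieldNormedType.Exports.
Local Open Scope classical_set_scope.
Local Open Scope ring_scope.

(* A closed F is compact, so every open cover of F has a finite subcover;
   as tau is finitely subadditive this gives tau(F) <= nu(F) = P(F).
   Cut the range of phi by a grid c + k d: every integral of phi, against a
   finitely additive xi_j or against P, lies between c + d * sum_k mu(G_k)
   and that bound plus d, where G_k is the superlevel set of phi at c + k d.
   With closed G_k = [phi >= c + k d], the limsup of the Cesaro means of the
   xi_j(G_k) is at most P(G_k), whence tau(phi) <= int phi dP + d.  With
   open G_k = [phi > c + k d], the same bound for the closed complements
   makes the Cesaro means of the xi_j(G_k) eventually at least P(G_k) - e,
   whence int phi dP <= tau(phi) + d.  Let d go to 0. *)

Section fa_outer_prob_theory.
Context {R : realType} {X : pmetricType R} {xi : set X -> R}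
  (hxi : fa_outer_prob xi).

Lemma fa_ge0 A : 0 <= xi A.
Proof. by case: hxi => h _ _; case/andP: (h A). Qed.

Lemma fa_setT : xi setT = 1.
Proof. by case: hxi. Qed.

Lemma faU A B : A `&` B = set0 -> xi (A `|` B) = xi A + xi B.
Proof. by case: hxi => _ h _; apply: h. Qed.

Lemma fa_set0 : xi set0 = 0.
Proof. by have := faU set0 set0 (setI0 _); rewrite setU0; lra. Qed.

Lemma fa_splitI A B : xi A = xi (A `&` B) + xi (A `&` ~` B).
Proof.
rewrite -faU; last by rewrite setIACA setICr setI0.
by rewrite -setIUr setUCr setIT.
Qed.

Lemma fa_le A B : A `<=` B -> xi A <= xi B.
Proof. by move=> AB; rewrite (fa_splitI B A) setIidr // lerDl fa_ge0. Qed.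

Lemma faC A : xi (~` A) = 1 - xi A.
Proof. by have := fa_splitI setT A; rewrite !setTI fa_setT; lra. Qed.

Lemma fa_subadditive A B : xi (A `|` B) <= xi A + xi B.
Proof.
rewrite -[in xi _](setDUK (@subsetUl _ A B)) faU ?setDIK //.
by rewrite lerD2l fa_le // => x [[]].
Qed.

Lemma fa_bigU_le (I : Type) (s : seq I) (F : I -> set X) :
  xi (\big[setU/set0]_(i <- s) F i) <= \sum_(i <- s) xi (F i).
Proof.
elim: s => [|a s IH]; first by rewrite !big_nil fa_set0.
by rewrite !big_cons (le_trans (fa_subadditive _ _)) // lerD2l.
Qed.

Lemma fa_bigU (I : eqType) (s : seq I) (F : I -> set X) : uniq s ->
  (forall i j, i != j -> F i `&` F j = set0) ->
  xi (\big[setU/set0]_(i <- s) F i) = \sum_(i <- s) xi (F i).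
Proof.
move=> + dF; elim: s => [|a s IH] /=; first by rewrite !big_nil fa_set0.
move=> /andP[as_ us]; rewrite !big_cons faU ?IH // big_distrr /=.
by apply: big1_seq => i /andP[_ iS]; apply: dF; apply: contraNneq as_ => ->.
Qed.

Lemma fa_partition n (P : 'I_n -> set X) B : finite_partition P ->
  \sum_(i < n) xi (P i `&` B) = xi B.
Proof.
case=> dP cP; rewrite -fa_bigU ?index_enum_uniq //; last first.
  by move=> i j ij; rewrite setIACA dP // set0I.
congr xi; rewrite -bigcup_seq -setI_bigcupl; apply/setIidr => x _.
by have [i Pix] := cP x; exists i => //=; rewrite mem_index_enum.
Qed.

End fa_outer_prob_theory.

Lemma sumr_if_leq {V : nmodType} (a : V) l m : (l < m)%N ->
  \sum_(1 <= k < m) (if (k <= l)%N then a else 0) = a *+ l.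
Proof.
move=> lm; transitivity (\sum_(1 <= k < l.+1) a); last by rewrite sumr_const_nat subn1.
by rewrite (big_nat_widen _ _ _ _ _ lm) [RHS]big_mkcond.
Qed.

Section fa_integral_levels.
Context {R : realType} {X : pmetricType R} {xi : set X -> R}
  (hxi : fa_outer_prob xi) {phi : X -> R} {c d : R} (d_ge0 : 0 <= d)
  {m : nat} {lvl : X -> nat} (lvl_lt : forall x, (lvl x < m)%N)
  (lvl_lb : forall x, c + (lvl x)%:R * d <= phi x)
  (lvl_ub : forall x, phi x <= c + (lvl x).+1%:R * d).

Let Q (i : 'I_m) : set X := [set x | lvl x = i].

Let Q_partition : finite_partition Q.
Proof.
split=> [i j ij|x]; last by exists (Ordinal (lvl_lt x)).
by apply/disjoints_subset => x; rewrite /Q /= => -> /val_inj ji; rewrite ji eqxx in ij.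
Qed.

Let darboux_le n (P : 'I_n -> set X) : finite_partition P ->
  \sum_(j < n) inf [set phi x | x in P j] * xi (P j) <=
  \sum_(i < m) (c + i.+1%:R * d) * xi (Q i).
Proof.
move=> hP.
under eq_bigr do rewrite -(fa_partition hxi _ _ _ Q_partition) mulr_sumr.
under [leRHS]eq_bigr do rewrite -(fa_partition hxi _ _ _ hP) mulr_sumr.
rewrite exchange_big /=; apply: ler_sum => i _; apply: ler_sum => j _.
have [QP0|/set0P [x [Qx Px]]] := eqVneq (Q i `&` P j) set0.
  by rewrite QP0 setIC QP0 fa_set0 // !mulr0.
rewrite setIC ler_wpM2r ?fa_ge0 //; apply: le_trans (ge_inf _ _) _.
- by exists c => _ [y _ <-]; apply: le_trans (lvl_lb y); rewrite lerDl mulr_ge0.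
- by exists x.
- by rewrite (le_trans (lvl_ub x)) //= Qx.
Qed.

(* Layer-cake formula: sum_i i xi[lvl = i] = sum_(k >= 1) xi[lvl >= k]. *)
Let sum_levels a : \sum_(i < m) (a + i%:R * d) * xi (Q i) =
  a + d * \sum_(1 <= k < m) xi [set x | (k <= lvl x)%N].
Proof.
have xiG k : xi [set x | (k <= lvl x)%N] =
    \sum_(i < m) (if (k <= i)%N then xi (Q i) else 0).
  rewrite -(fa_partition hxi _ _ _ Q_partition); apply: eq_bigr => i _.
  case: ifPn => ki; last rewrite -(fa_set0 hxi).
    by congr xi; apply/seteqP; split=> [x []//|x Qx]; split; rewrite //= Qx.
  by congr xi; apply/seteqP; split=> x //= [Qx]; rewrite Qx (negbTE ki).
have sumQ : \sum_(i < m) xi (Q i) = 1.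
  rewrite -(fa_setT hxi) -(fa_partition hxi _ _ _ Q_partition).
  by under [RHS]eq_bigr do rewrite setIT.
transitivity (\sum_(i < m) (a * xi (Q i) + d * (xi (Q i) *+ i))).
  by apply: eq_bigr => i _; rewrite -mulr_natr; ring.
rewrite big_split -!mulr_sumr /= sumQ mulr1; congr (_ + d * _).
under [RHS]eq_bigr do rewrite xiG.
by rewrite exchange_big; apply: eq_bigr => i _; rewrite sumr_if_leq.
Qed.

Lemma fa_integral_levels :
  c + d * \sum_(1 <= k < m) xi [set x | (k <= lvl x)%N] <= fa_integral xi phi
  <= c + d + d * \sum_(1 <= k < m) xi [set x | (k <= lvl x)%N].
Proof.
have ub : ubound [set s | exists n (P : 'I_n -> set X), finite_partition P /\
    s = \sum_(i < n) inf [set phi x | x in P i] * xi (P i)]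
  (\sum_(i < m) (c + i.+1%:R * d) * xi (Q i)).
  by move=> _ [n [P [hP ->]]]; apply: darboux_le.
apply/andP; split.
  rewrite -sum_levels; apply: le_trans (ub_le_sup (ex_intro _ _ ub) _); last first.
    by exists m, Q.
  apply: ler_sum => i _.
  have [Q0|/set0P [x Qx]] := eqVneq (Q i) set0; first by rewrite Q0 fa_set0 // !mulr0.
  rewrite ler_wpM2r ?fa_ge0 //; apply: lb_le_inf; first by exists (phi x), x.
  by move=> _ [y Qy <-]; rewrite -Qy lvl_lb.
have -> : c + d + d * \sum_(1 <= k < m) xi [set x | (k <= lvl x)%N] =
    \sum_(i < m) (c + i.+1%:R * d) * xi (Q i).
  by rewrite -sum_levels; apply: eq_bigr => i _; rewrite -natr1; ring.
by apply: ge_sup ub; eexists; exists m, Q.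
Qed.

End fa_integral_levels.

Lemma threshold_level {T : Type} (above : nat -> T -> Prop) m :
  (forall x, above 0%N x) -> (forall x, ~ above m x) ->
  (forall k l x, (k <= l)%N -> above l x -> above k x) ->
  exists lvl : T -> nat,
    (forall x, (lvl x < m)%N) /\ (forall k x, (k <= lvl x)%N <-> above k x).
Proof.
move=> above0 aboveNm above_mono.
have lvl_ex x : exists k, (k < m)%N /\ forall j, (j <= k)%N <-> above j x.
  have ex0 : exists k, `[< above k x >] by exists 0%N; apply/asboolP.
  have ub k : `[< above k x >] -> (k <= m)%N.
    move=> /asboolP akx; rewrite leqNgt; apply/negP => mk.
    by apply: (aboveNm x); apply: above_mono akx; exact: ltnW.
  case: (ex_maxnP ex0 ub) => k /asboolP akx kmax; exists k; split.
    by rewrite ltnNge; apply/negP => mk; exact: aboveNm x (above_mono _ _ _ mk akx).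
  by move=> j; split=> [jk|ajx]; [exact: above_mono jk akx|apply/kmax/asboolP].
have [lvl hlvl] := choice lvl_ex.
by exists lvl; split=> [x|k x]; have [? ?] := hlvl x.
Qed.

Lemma grid_level {R : realType} {T : Type} {phi : T -> R} {c d : R} {m : nat}
    (b : bool) : 0 <= d -> (forall x, c < phi x) ->
    (forall x, phi x < c + m%:R * d) ->
  exists lvl : T -> nat, [/\ forall x, (lvl x < m)%N,
    forall x, c + (lvl x)%:R * d <= phi x,
    forall x, phi x <= c + (lvl x).+1%:R * d &
    forall k x, (k <= lvl x)%N <-> (c + k%:R * d < phi x ?<= if b)].
Proof.
move=> d_ge0 c_lt phi_lt.
have [x|x|k l x kl|lvl [lvl_lt lvlE]] :=
  threshold_level (fun k x => c + k%:R * d < phi x ?<= if b) m.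
- by rewrite mul0r addr0 lteifS.
- by apply/negP; rewrite -lteifNE lteifS.
- apply: (lteif_trans (C1 := true)).
  by rewrite lteifT lerD2l ler_wpM2r // ler_nat.
exists lvl; split=> // x; first exact/lteifW/(lvlE _ x).1.
have : ~ (c + (lvl x).+1%:R * d < phi x ?<= if b) by move/lvlE; rewrite ltnn.
by move/negP; rewrite -lteifNE => /lteifW.
Qed.

Lemma bounded_grid {R : realType} {T : Type} {f : T -> R} {M d : R} :
  0 < d -> (forall x, `|f x| <= M) ->
  exists c (m : nat), (forall x, c < f x) /\ (forall x, f x < c + m%:R * d).
Proof.
move=> d_gt0 fM; pose K := `|M| + 1.
have K_gt0 : 0 < K by rewrite ltr_wpDl.
have /archi_boundP : 0 <= 2 * K / d by rewrite divr_ge0 ?mulr_ge0 ?ltW.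
rewrite ltr_pdivrMr // => Kb; exists (- K), (Num.bound (2 * K / d)).
have := ler_norm M; rewrite /K in Kb *.
by split=> x; have := fM x; rewrite ler_norml => /andP[lo hi]; lra.
Qed.

Section limn_esup_real.
Context {R : realType}.
Implicit Types (u : nat -> R) (l : R).
Local Open Scope ereal_scope.

Lemma limn_esup_le u l :
  (forall e : R, (0 < e)%R -> \forall n \near \oo, (u n <= l + e)%R) ->
  limn_esup (fun n => (u n)%:E) <= l%:E.
Proof.
move=> ule; apply/lee_addgt0Pr => e e0; have [N _ hN] := ule e e0.
rewrite /limn_esup limf_esupE; apply: le_trans (ereal_inf_lbound _) _.
  by exists [set n | (N <= n)%N]; [exists N|].
by apply: ge_ereal_sup => _ [n /hN ? <-]; rewrite -EFinD lee_fin.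
Qed.

Lemma limn_esup_lt u (l : \bar R) : limn_esup (fun n => (u n)%:E) < l ->
  \forall n \near \oo, (u n)%:E < l.
Proof.
rewrite /limn_esup limf_esupE => /ereal_inf_lt [_ [V [N _ NV] <-]] Vl.
exists N => // n Nn; apply: le_lt_trans Vl; apply: ereal_sup_ubound.
by exists n => //; apply: NV.
Qed.

Lemma limn_esup_ge u l :
  (forall e : R, (0 < e)%R -> \forall n \near \oo, (l - e <= u n)%R) ->
  l%:E <= limn_esup (fun n => (u n)%:E).
Proof.
move=> leu; apply/lee_addgt0Pr => e e0; rewrite leNgt; apply/negP.
rewrite -lteBrDr // -EFinB => /limn_esup_lt ult.
near \oo => n.
have : (l - e <= u n)%R by near: n; exact: leu.
have : (u n)%:E < (l - e)%:E by near: n.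
by rewrite lte_fin => /lt_le_trans h /h; rewrite ltxx.
Unshelve. all: by end_near. Qed.

Lemma limn_esup_ge0 u : (forall n, (0 <= u n)%R) -> 0 <= limn_esup (fun n => (u n)%:E).
Proof.
move=> u_ge0; apply: limf_esup_ge0 => [|n]; last by rewrite lee_fin.
by case=> N _ /(_ N (leqnn N)).
Qed.

Lemma sum_limn_esup_near (I : Type) (s : seq I) (u : I -> nat -> R)
    (b : I -> R) (e : R) :
  (0 < e)%R -> (forall k, limn_esup (fun n => (u k n)%:E) <= (b k)%:E) ->
  \forall n \near \oo, (\sum_(k <- s) u k n <= \sum_(k <- s) b k + e)%R.
Proof.
move=> + ub; elim: s e => [|k s IH] e e0.
  by apply: nearW => n; rewrite !big_nil add0r ltW.
have e2 : (0 < e / 2)%R by rewrite divr_gt0.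
have : limn_esup (fun n => (u k n)%:E) < (b k + e / 2)%:E.
  by apply: le_lt_trans (ub k) _; rewrite lte_fin ltrDl.
move/limn_esup_lt => uk; near=> n.
have : (\sum_(k <- s) u k n <= \sum_(k <- s) b k + e / 2)%R by near: n; exact: IH.
have : (u k n)%:E < (b k + e / 2)%:E by near: n.
by rewrite !big_cons lte_fin; lra.
Unshelve. all: by end_near. Qed.

End limn_esup_real.

Section cesaro_means.
Context {R : realType} {X : pmetricType R} (xi : nat -> set X -> R)
  (hxi : forall j, fa_outer_prob (xi j)).

Definition cesaro (A : set X) (n : nat) : R := n%:R^-1 * \sum_(j < n) xi j A.

Lemma cesaro_ge0 A n : 0 <= cesaro A n.
Proof. by rewrite mulr_ge0 ?invr_ge0 // sumr_ge0 // => j _; apply: fa_ge0. Qed.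

Lemma cesaro_le A B n : A `<=` B -> cesaro A n <= cesaro B n.
Proof.
by move=> AB; rewrite ler_wpM2l ?invr_ge0 // ler_sum // => j _; apply: fa_le.
Qed.

Lemma cesaro_affine (a c : R) (H : nat -> set X) (s : seq nat) n : (0 < n)%N ->
  n%:R^-1 * \sum_(j < n) (a + c * \sum_(k <- s) xi j (H k)) =
  a + c * \sum_(k <- s) cesaro (H k) n.
Proof.
move=> n_gt0; have n_neq0 : n%:R != 0 :> R by rewrite pnatr_eq0 -lt0n.
rewrite big_split /= sumr_const card_ord -mulr_sumr exchange_big mulrDr.
by rewrite -[a *+ n]mulr_natr mulrCA mulVf // mulr1 mulrCA mulr_sumr.
Qed.

Lemma cesaroC A n : (0 < n)%N -> cesaro (~` A) n = 1 - cesaro A n.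
Proof.
move=> n_gt0; rewrite /cesaro; under eq_bigr do rewrite (faC (hxi _)).
by rewrite sumrB sumr_const card_ord mulrBr mulVf // pnatr_eq0 -lt0n.
Qed.

Lemma cesaro_le1 A n : cesaro A n <= 1.
Proof.
have [->|n_gt0] := posnP n; first by rewrite /cesaro invr0 mul0r.
by have := cesaro_ge0 (~` A) n; rewrite cesaroC //; lra.
Qed.

Lemma cesaro_bigU (s : seq nat) (B : nat -> set X) n :
  cesaro (\big[setU/set0]_(k <- s) B k) n <= \sum_(k <- s) cesaro (B k) n.
Proof.
rewrite /cesaro -mulr_sumr ler_wpM2l ?invr_ge0 // exchange_big /=.
by apply: ler_sum => j _; apply: fa_bigU_le.
Qed.

Local Open Scope ereal_scope.

Lemma tau_setE A : tau_set xi A = limn_esup (fun n => (cesaro A n)%:E).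
Proof. by []. Qed.

Lemma tau_set_ge0 A : 0 <= tau_set xi A.
Proof. by rewrite tau_setE limn_esup_ge0 // => n; apply: cesaro_ge0. Qed.

Lemma tau_set_fin_num A : tau_set xi A \is a fin_num.
Proof.
rewrite ge0_fin_numE ?tau_set_ge0 // (@le_lt_trans _ _ 1%E) ?ltry // tau_setE.
apply: limn_esup_le => e e0; apply: nearW => n.
by rewrite (le_trans (cesaro_le1 _ _)) // lerDl ltW.
Qed.

Lemma tau_set_subadditive A (s : seq nat) (B : nat -> set X) :
  A `<=` \big[setU/set0]_(k <- s) B k ->
  tau_set xi A <= \sum_(k <- s) tau_set xi (B k).
Proof.
move=> AB; rewrite -(eq_bigr _ (fun k _ => fineK (tau_set_fin_num (B k)))) sumEFin.
rewrite tau_setE; apply: limn_esup_le => e e0; near=> n.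
apply: le_trans (cesaro_le _ _ _ AB) _; apply: le_trans (cesaro_bigU _ _ _) _.
near: n; apply: (@sum_limn_esup_near _ _ s (fun k => cesaro (B k)) _ _ e0) => k.
by rewrite fineK ?tau_set_fin_num.
Unshelve. all: by end_near. Qed.

Lemma tau_set_le_nu F : compact F -> tau_set xi F <= nu xi F.
Proof.
move=> cF; apply: le_trans (ereal_sup_ubound _); last by exists 1%R => //=.
apply: le_ereal_inf_tmp => _ [I [openI FI] <-].
have [D _ FD] : finite_subset_cover [set: nat] I F.
  by move: cF; rewrite compact_cover; apply=> // i _; exact: (openI i).1.
pose N := (\max_(i <- finmap.enum_fset D) i.+1)%N.
apply: le_trans (nneseries_lim_ge N (fun k _ _ => tau_set_ge0 (I k))).
apply: tau_set_subadditive; rewrite -bigcup_seq => x /FD [i Di Iix].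
by exists i => //=; rewrite mem_index_iota leq0n /=; apply: leq_bigmax_seq.
Qed.

End cesaro_means.

Section tau_fun_levels.
Context {R : realType} {X : pmetricType R} {xi : nat -> set X -> R}
  (hxi : forall j, fa_outer_prob (xi j)) {phi : X -> R} {c d : R}
  (d_gt0 : 0 < d) {m : nat} {lvl : X -> nat}
  (lvl_lt : forall x, (lvl x < m)%N)
  (lvl_lb : forall x, c + (lvl x)%:R * d <= phi x)
  (lvl_ub : forall x, phi x <= c + (lvl x).+1%:R * d).

Let G k := [set x | (k <= lvl x)%N].

Let mean_fa_integral_levels n : (0 < n)%N ->
  c + d * \sum_(1 <= k < m) cesaro xi (G k) n
  <= n%:R^-1 * \sum_(j < n) fa_integral (xi j) phi
  <= c + d + d * \sum_(1 <= k < m) cesaro xi (G k) n.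
Proof.
move=> n_gt0; rewrite -!cesaro_affine //; apply/andP.
have lvl_bounds j := fa_integral_levels (hxi j) (ltW d_gt0) lvl_lt lvl_lb lvl_ub.
by split; rewrite ler_wpM2l ?invr_ge0 // ler_sum // => j _; case/andP: (lvl_bounds j).
Qed.

Let near_cesaro_levels (H : nat -> set X) (b : nat -> R) (e : R) : 0 < e ->
    (forall k, (tau_set xi (H k) <= (b k)%:E)%E) ->
  \forall n \near \oo, d * \sum_(1 <= k < m) cesaro xi (H k) n <=
                      d * \sum_(1 <= k < m) b k + e.
Proof.
move=> e0 tauH; near=> n.
rewrite -[e](divfK (lt0r_neq0 d_gt0)) [_ / d * d]mulrC -mulrDr ler_pM2l //.
near: n; apply: (@sum_limn_esup_near _ _ _ (fun k => cesaro xi (H k))) => //.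
by rewrite divr_gt0.
Unshelve. all: by end_near. Qed.

Lemma tau_fun_le_levels (b : nat -> R) :
    (forall k, (tau_set xi (G k) <= (b k)%:E)%E) ->
  (tau_fun xi phi <= (c + d + d * \sum_(1 <= k < m) b k)%:E)%E.
Proof.
move=> tauG; apply: limn_esup_le => e e0; near=> n.
have n_gt0 : (0 < n)%N by near: n; exists 1%N.
have sumG : d * \sum_(1 <= k < m) cesaro xi (G k) n <=
            d * \sum_(1 <= k < m) b k + e.
  by near: n; exact: near_cesaro_levels.
by have /andP[_ mean_le] := mean_fa_integral_levels _ n_gt0; lra.
Unshelve. all: by end_near. Qed.

Lemma tau_fun_ge_levels (b : nat -> R) :
    (forall k, (tau_set xi (~` G k) <= (1 - b k)%:E)%E) ->
  ((c + d * \sum_(1 <= k < m) b k)%:E <= tau_fun xi phi)%E.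
Proof.
move=> tauGC; apply: limn_esup_ge => e e0; near=> n.
have n_gt0 : (0 < n)%N by near: n; exists 1%N.
have sumGC : d * \sum_(1 <= k < m) cesaro xi (~` G k) n <=
             d * \sum_(1 <= k < m) (1 - b k) + e.
  by near: n; exact: near_cesaro_levels.
move: sumGC; under eq_bigr do rewrite cesaroC //; rewrite !sumrB => sumGC.
by have /andP[mean_ge _] := mean_fa_integral_levels _ n_gt0; lra.
Unshelve. all: by end_near. Qed.

End tau_fun_levels.

Section borel_measurability.
Context {T : ptopologicalType}.

Lemma borel_open_measurable (U : set T) : open U -> measurable (U : set (borel T)).
Proof. exact: sub_sigma_algebra. Qed.

Lemma borel_closed_measurable (F : set T) :
  closed F -> measurable (F : set (borel T)).
Proof.
move=> /closed_openC/borel_open_measurable/measurableC.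
by rewrite setCK.
Qed.

Lemma continuous_borel_measurable {R : realType} (f : T -> R) :
  continuous f -> measurable_fun [set: borel T] (f : borel T -> R).
Proof.
move=> cf; apply: (measurability _ (measurable_realfun.RGenOpens.measurableE R)).
move=> _ [_ [a [b ->]] <-]; rewrite setTI; apply: borel_open_measurable.
by move/continuousP: cf; apply; apply: interval_open.
Qed.

End borel_measurability.

Lemma sum_indic_level {R : realType} {T : Type} (lvl : T -> nat) m x :
  (lvl x < m)%N ->
  \sum_(1 <= k < m) \1_[set y | (k <= lvl y)%N] x = (lvl x)%:R :> R.
Proof.
move=> lm; rewrite -(sumr_if_leq (1 : R) _ _ lm); apply: eq_bigr => k _.
rewrite indicE; case: ifPn => h; first by rewrite mem_set.
by rewrite memNset //= => /(negP h).
Qed.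

Section integral_levels.
Context {R : realType} {d0 : measure_display} {T : measurableType d0}
  (P : probability T R).
Local Open Scope ereal_scope.

Lemma integrable_step (c a : R) (H : nat -> set T) (s : seq nat) :
  (forall k, measurable (H k)) ->
  P.-integrable setT (fun x => c%:E + \sum_(k <- s) (a * \1_(H k) x)%:E).
Proof.
move=> mH; apply: integrableD => //; first exact: finite_measure_integrable_cst.
apply: integrable_sum => // k _; under eq_fun do rewrite EFinM.
exact/integrableZl/integrable_indic.
Qed.

Lemma integral_step (c a : R) (H : nat -> set T) (s : seq nat) :
  (forall k, measurable (H k)) ->
  \int[P]_x (c%:E + \sum_(k <- s) (a * \1_(H k) x)%:E) =
  (c + a * \sum_(k <- s) fine (P (H k)))%:E.
Proof.
move=> mH; have iH k : P.-integrable setT (fun x => (a * \1_(H k) x)%:E).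
  by under eq_fun do rewrite EFinM; exact/integrableZl/integrable_indic.
rewrite integralD //; [|exact: finite_measure_integrable_cst|exact: integrable_sum].
rewrite integral_cst // -[X in c%:E * X]/(P setT) probability_setT mule1.
rewrite integral_sum // EFinD mulr_sumr -sumEFin.
congr (_ + _); apply: eq_bigr => k _.
under eq_integral do rewrite EFinM.
rewrite integralZl ?integral_indic ?setIT //; last exact: integrable_indic.
by rewrite EFinM fineK ?fin_num_measure.
Qed.

Lemma integral_levels {phi : T -> R} {c d : R} {m : nat} {lvl : T -> nat} :
  P.-integrable setT (EFin \o phi) ->
  (forall x, (lvl x < m)%N) ->
  (forall x, (c + (lvl x)%:R * d <= phi x)%R) ->
  (forall x, (phi x <= c + (lvl x).+1%:R * d)%R) ->
  (forall k, measurable [set x | (k <= lvl x)%N]) ->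
  (c + d * \sum_(1 <= k < m) fine (P [set x | (k <= lvl x)%N]))%:E
    <= \int[P]_x (phi x)%:E
    <= (c + d + d * \sum_(1 <= k < m) fine (P [set x | (k <= lvl x)%N]))%:E.
Proof.
move=> iphi lvl_lt lvl_lb lvl_ub mG; apply/andP; split; rewrite -integral_step //.
  apply: le_integral => //; first exact: integrable_step _ _ _ _ mG.
  move=> x _; rewrite sumEFin -EFinD lee_fin -mulr_sumr sum_indic_level //.
  by rewrite mulrC lvl_lb.
apply: le_integral => //; first exact: integrable_step _ _ _ _ mG.
move=> x _; rewrite sumEFin -EFinD lee_fin -mulr_sumr sum_indic_level //.
by have := lvl_ub x; rewrite -natr1; lra.
Qed.

End integral_levels.

Section main.
Context {R : realType} {X : pmetricType R} {xi : nat -> set X -> R}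
  (hxi : forall j, fa_outer_prob (xi j)) (cX : compact [set: X])
  {P : probability (borel X) R}
  (hP : forall A : set (borel X), measurable A -> P A = eta_borel xi A)
  {phi : X -> R} (cphi : continuous phi).
Local Open Scope ereal_scope.

Let tau_set_le_prob {F : set X} : closed F -> tau_set xi F <= (fine (P F))%:E.
Proof.
move=> cF; have mF := borel_closed_measurable _ cF.
rewrite fineK ?fin_num_measure // hP //.
exact: tau_set_le_nu _ hxi _ (subclosed_compact cF cX (subsetT F)).
Qed.

Let phi_bounded : [bounded phi x | x in [set: X]].
Proof.
have := continuous_compact (continuous_subspaceT cphi) cX.
move=> /compact_bounded [M [M_real hM]].
by exists M; split=> // N MN x _; apply: hM MN _ (imageT _ _).
Qed.

Let phi_integrable : P.-integrable setT (EFin \o phi).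
Proof.
apply: measurable_bounded_integrable => //.
- by rewrite -[X in X < _]/(P setT) probability_setT ltry.
- exact: continuous_borel_measurable.
Qed.

Let phi_grid {d : R} : (0 < d)%R -> exists c (m : nat),
  (forall x, c < phi x)%R /\ (forall x, phi x < c + m%:R * d)%R.
Proof.
have [M [_ hM]] := phi_bounded; move=> d_gt0.
by apply: (bounded_grid d_gt0 (fun x => hM (M + 1)%R _ x I)); rewrite ltrDl.
Qed.

Lemma tau_fun_le_integral (d : R) : (0 < d)%R ->
  tau_fun xi phi <= \int[P]_x (phi x)%:E + d%:E.
Proof.
move=> d_gt0; have [c [m [c_lt phi_lt]]] := phi_grid d_gt0.
have [lvl [lvl_lt lvl_lb lvl_ub lvlE]] := grid_level true (ltW d_gt0) c_lt phi_lt.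
have closed_level k : closed [set x | (k <= lvl x)%N].
  have -> : [set x | (k <= lvl x)%N] = phi @^-1` [set r | c + k%:R * d <= r]%R.
    by apply/seteqP; split=> x /lvlE.
  by apply: preimage_closed => [x _|]; [exact: cphi|exact: closed_ge].
apply: le_trans (tau_fun_le_levels hxi d_gt0 lvl_lt lvl_lb lvl_ub _
  (fun k => tau_set_le_prob (closed_level k))) _.
have /andP[+ _] := integral_levels P phi_integrable lvl_lt lvl_lb lvl_ub
  (fun k => borel_closed_measurable _ (closed_level k)).
by move=> ?; rewrite addrAC EFinD; apply: leeD2r.
Qed.

Lemma integral_le_tau_fun (d : R) : (0 < d)%R ->
  \int[P]_x (phi x)%:E <= tau_fun xi phi + d%:E.
Proof.
move=> d_gt0; have [c [m [c_lt phi_lt]]] := phi_grid d_gt0.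
have [lvl [lvl_lt lvl_lb lvl_ub lvlE]] := grid_level false (ltW d_gt0) c_lt phi_lt.
pose G k := [set x | (k <= lvl x)%N].
have open_level k : open (G k).
  have -> : G k = phi @^-1` [set r | c + k%:R * d < r]%R.
    by apply/seteqP; split=> x /lvlE.
  by apply: open_comp => [x _|]; [exact: cphi|exact: open_gt].
have mG k : measurable (G k : set (borel X)) by exact: borel_open_measurable.
have tau_levelC k : tau_set xi (~` G k) <= (1 - fine (P (G k)))%:E.
  rewrite (le_trans (tau_set_le_prob (open_closedC (open_level k)))) //.
  by rewrite probability_setC // fineB ?fin_num_measure.
apply: le_trans (_ : _ <= (c + d + d * \sum_(1 <= k < m) fine (P (G k)))%:E) _.
  by case/andP: (integral_levels P phi_integrable lvl_lt lvl_lb lvl_ub mG).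
rewrite addrAC EFinD; apply: leeD2r.
exact: (tau_fun_ge_levels hxi d_gt0 lvl_lt lvl_lb lvl_ub _ tau_levelC).
Qed.

End main.

Theorem mainTheorem16 (R : realType) (X : pmetricType R)
  (xi : nat -> set X -> R) :
  compact [set: X] ->
  (forall j, fa_outer_prob (xi j)) ->
  (* "eta is a probability measure": eta coincides on the Borel sets with a
     probability measure P on the Borel sigma-algebra of X *)
  forall P : probability (borel X) R,
    (forall A : set (borel X), measurable A -> P A = eta_borel xi A) ->
    forall phi : X -> R, continuous phi ->
      (\int[P]_x (phi x)%:E)%E = tau_fun xi phi.
Proof.
move=> cX hxi P hP phi cphi; apply/eqP; rewrite eq_le.
apply/andP; split; apply/lee_addgt0Pr => d d_gt0.
- exact: integral_le_tau_fun.
- exact: tau_fun_le_integral.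
Qed.
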